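(* For a fixed value of the sticky size $N$, the node potential $\phi_x$ of a node $x$ of a pairing heap is monotone nondecreasing in each of $|x_L|$ and $|x_R|$, the sizes of its left and right subtrees in the binary view.
   Context: A pairing heap is a heap-ordered rooted ordered tree; its binary view is the leftmost-child/right-sibling representation (left child in the binary view = leftmost child in the tree, right child in the binary view = next sibling to the right). For a node $x$, $x_L$ and $x_R$ denote its left and right children in the binary view, $|\cdot|$ denotes subtree size in the binary view (a missing child has size $0$), and $|x| = |x_L|+|x_R|+1$. $N \ge 1$ is the sticky size (a power of two) and $\lg=\log_2$. Node potential: if $|x_L| > \lg N$ and $|x_R| > \lg N$, $\phi_x = 400 + 100\lg|x|$; if $|x_L| \le \lg N < |x_R|$, $\phi_x = 400 + 100\frac{|x_L|}{\lg N}\lg|x|$; if $|x_R| \le \lg N < |x_L|$, $\phi_x = 400 + 100\frac{|x_R|}{\lg N}\lg|x|$; if $|x_L| \le \lg N$ and $|x_R| \le \lg N$, $\phi_x = 0$. *)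

From Stdlib Require Import Reals Lra Lia.
Open Scope R_scope.

Definition lg (x : R) : R := ln x / ln 2.

(* Node potential phi_x, as a function of the sticky size N and of the
   binary-view subtree sizes a = |x_L|, b = |x_R|; |x| = a + b + 1. *)
Definition phi (N a b : nat) : R :=
  let sx := INR (a + b + 1) in
  let lN := lg (INR N) in
  let A := INR a in
  let B := INR b in
  if Rlt_dec lN A then
    (if Rlt_dec lN B then 400 + 100 * lg sx
     else 400 + 100 * (B / lN) * lg sx)
  else
    (if Rlt_dec lN B then 400 + 100 * (A / lN) * lg sx
     else 0).

(* Binary view of a pairing heap (leftmost-child / right-sibling). *)
Inductive btree : Type := Leaf | Node (l : btree) (r : btree).
Fixpoint bsize (t : btree) : nat :=
  match t with Leaf => 0%nat | Node l r => (bsize l + bsize r + 1)%nat end.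
Definition node_phi (N : nat) (t : btree) : R :=
  match t with Leaf => 0 | Node l r => phi N (bsize l) (bsize r) end.

(* Write [w c] for [1] if [c > lg N] and for [c / lg N] otherwise; [w] is
   nondecreasing with values in [[0, 1]].  Then [phi N a b] is [0] when both
   [a] and [b] are at most [lg N], and [400 + 100 w(a) w(b) lg|x|] otherwise.
   Growing [a] or [b] either leaves the first regime for the second, jumping
   from [0] to at least [400], or stays in the second, where each factor of
   the product is nonnegative and nondecreasing. *)

From Stdlib Require Import Reals Lra Lia.
Open Scope R_scope.

Lemma lg_le (x y : R) : 0 < x -> x <= y -> lg x <= lg y.
Proof.
  intros Hx Hxy. unfold lg, Rdiv.
  assert (Hln2 : 0 < / ln 2).
  { apply Rinv_0_lt_compat. rewrite <- ln_1. apply ln_increasing; lra. }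
  apply Rmult_le_compat_r; [lra |].
  destruct (Req_dec x y) as [-> | Hne]; [lra |].
  left. apply ln_increasing; lra.
Qed.

Lemma lg_ge0 (x : R) : 1 <= x -> 0 <= lg x.
Proof.
  intros Hx. replace 0 with (lg 1) by (unfold lg; rewrite ln_1; lra).
  apply lg_le; lra.
Qed.

Definition weight (L c : R) : R := if Rlt_dec L c then 1 else c / L.

Lemma weight_ge0 (L c : R) : 0 <= L -> 0 <= c -> 0 <= weight L c.
Proof.
  intros HL Hc. unfold weight.
  destruct (Rlt_dec L c); [lra |].
  destruct (Req_dec L 0) as [-> | HL0].
  - rewrite Rdiv_0_r; lra.
  - apply Rle_mult_inv_pos; lra.
Qed.

Lemma weight_le (L c c' : R) : 0 <= L -> 0 <= c -> c <= c' ->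
  weight L c <= weight L c'.
Proof.
  intros HL Hc Hcc'. unfold weight.
  destruct (Req_dec L 0) as [-> | HL0].
  { rewrite !Rdiv_0_r. destruct (Rlt_dec 0 c), (Rlt_dec 0 c'); lra. }
  destruct (Rlt_dec L c), (Rlt_dec L c'); try lra.
  - apply (Rmult_le_reg_r L); [lra |]. field_simplify; lra.
  - apply Rmult_le_compat_r; [left; apply Rinv_0_lt_compat |]; lra.
Qed.

Lemma phi_weight (N a b : nat) :
  phi N a b =
  if Rlt_dec (lg (INR N)) (Rmax (INR a) (INR b))
  then 400 + 100 * weight (lg (INR N)) (INR a) * weight (lg (INR N)) (INR b)
                 * lg (INR (a + b + 1))
  else 0.
Proof.
  unfold phi, weight.
  destruct (Rlt_dec (lg (INR N)) (INR a)), (Rlt_dec (lg (INR N)) (INR b)),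
    (Rlt_dec (lg (INR N)) (Rmax (INR a) (INR b))); unfold Rmax in *;
    destruct (Rle_dec (INR a) (INR b)); first [lra | unfold Rdiv; ring].
Qed.

Lemma phi_sym (N a b : nat) : phi N a b = phi N b a.
Proof.
  unfold phi. replace (b + a + 1)%nat with (a + b + 1)%nat by lia.
  destruct (Rlt_dec _ (INR a)), (Rlt_dec _ (INR b)); reflexivity.
Qed.

Lemma phi_le_l (N a a' b : nat) : (1 <= N)%nat -> (a <= a')%nat ->
  phi N a b <= phi N a' b.
Proof.
  intros HN Ha. rewrite !phi_weight.
  assert (HL : 0 <= lg (INR N)) by (apply lg_ge0, (le_INR 1); exact HN).
  set (L := lg (INR N)) in *.
  assert (HA : 0 <= INR a <= INR a') by (split; [apply pos_INR | apply le_INR; exact Ha]).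
  assert (HB : 0 <= INR b) by apply pos_INR.
  assert (Hs : 0 <= lg (INR (a + b + 1)) <= lg (INR (a' + b + 1))).
  { split; [apply lg_ge0 | apply lg_le]; rewrite ?plus_INR; simpl;
      pose proof (le_INR _ _ Ha); lra. }
  pose proof (weight_ge0 L (INR a) HL (proj1 HA)) as Hwa.
  pose proof (weight_le L (INR a) (INR a') HL (proj1 HA) (proj2 HA)) as Hwa'.
  pose proof (weight_ge0 L (INR b) HL HB) as Hwb.
  set (wa := weight L (INR a)) in *; set (wa' := weight L (INR a')) in *;
  set (wb := weight L (INR b)) in *.
  set (s := lg (INR (a + b + 1))) in *; set (s' := lg (INR (a' + b + 1))) in *.
  clearbody wa wa' wb s s'.
  destruct (Rlt_dec L (Rmax (INR a) (INR b))) as [Hlt | Hge],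
    (Rlt_dec L (Rmax (INR a') (INR b))) as [Hlt' | Hge'].
  - apply Rplus_le_compat_l, Rmult_le_compat; try lra.
    + repeat apply Rmult_le_pos; lra.
    + apply Rmult_le_compat; lra.
  - exfalso. apply Hge'. eapply Rlt_le_trans; [exact Hlt |].
    apply Rle_max_compat_r; lra.
  - assert (0 <= wa' * wb * s').
    { repeat apply Rmult_le_pos; lra. }
    lra.
  - lra.
Qed.

Theorem lemma3 (N : nat) (HN : exists k : nat, N = (2 ^ k)%nat) :
  (forall a a' b : nat, (a <= a')%nat -> phi N a b <= phi N a' b) /\
  (forall a b b' : nat, (b <= b')%nat -> phi N a b <= phi N a b').
Proof.
  assert (HN1 : (1 <= N)%nat).
  { destruct HN as [k ->]. pose proof (Nat.pow_nonzero 2 k). lia. }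
  split.
  - intros a a' b Ha. exact (phi_le_l N a a' b HN1 Ha).
  - intros a b b' Hb. rewrite (phi_sym N a b), (phi_sym N a b').
    exact (phi_le_l N b b' a HN1 Hb).
Qed.
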